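(* Let $G\cong(\mathbb{C}^* )^N$ be an algebraic torus, $V,W$ finite-dimensional rational representations of $G$ with Hermitian norms, $v\in V\setminus\{0\}$, $w\in W\setminus\{0\}$, and $p_{w,v}(\sigma)=\log\frac{\|\sigma w\|^2}{\|w\|^2}-\log\frac{\|\sigma v\|^2}{\|v\|^2}$. Then there exists a sequence $\{\sigma_j\}\subset G$ with $p_{w,v}(\sigma_j)\to-\infty$ if and only if there exists an algebraic one-parameter subgroup $\lambda:\mathbb{C}^*\to G$ with $\lim_{|t|\to0}p_{w,v}(\lambda(t))=-\infty$. *)

From Stdlib Require Import Reals ZArith List.
Open Scope R_scope.

Record Cx := mkCx { Re : R; Im : R }.
Definition Cx0 : Cx := mkCx 0 0.
Definition Cx1 : Cx := mkCx 1 0.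
Definition Cadd (a b : Cx) : Cx := mkCx (Re a + Re b) (Im a + Im b).
Definition Cmul (a b : Cx) : Cx :=
  mkCx (Re a * Re b - Im a * Im b) (Re a * Im b + Im a * Re b).
Definition Cconj (a : Cx) : Cx := mkCx (Re a) (- Im a).
Definition Cnorm2 (a : Cx) : R := Re a * Re a + Im a * Im a.
Definition Cabs (a : Cx) : R := sqrt (Cnorm2 a).
Definition Cinv (a : Cx) : Cx := mkCx (Re a / Cnorm2 a) (- Im a / Cnorm2 a).
Fixpoint Cpow (a : Cx) (n : nat) : Cx :=
  match n with O => Cx1 | S m => Cmul a (Cpow a m) end.
Definition CpowZ (a : Cx) (k : Z) : Cx :=
  match k with
  | Z0 => Cx1
  | Zpos p => Cpow a (Pos.to_nat p)
  | Zneg p => Cinv (Cpow a (Pos.to_nat p))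
  end.
Fixpoint Csum (n : nat) (f : nat -> Cx) : Cx :=
  match n with O => Cx0 | S m => Cadd (Csum m f) (f m) end.
Fixpoint Cprod (n : nat) (f : nat -> Cx) : Cx :=
  match n with O => Cx1 | S m => Cmul (Cprod m f) (f m) end.

Definition in_torus (N : nat) (s : nat -> Cx) : Prop :=
  forall i, (i < N)%nat -> s i <> Cx0.
Definition tmul (s t : nat -> Cx) : nat -> Cx := fun i => Cmul (s i) (t i).
Definition tone : nat -> Cx := fun _ => Cx1.

(** Laurent monomial sigma^alpha and Laurent polynomials in N variables,
    i.e. regular functions on the torus *)
Definition monomial (N : nat) (s : nat -> Cx) (a : nat -> Z) : Cx :=
  Cprod N (fun i => CpowZ (s i) (a i)).
Definition laurentN := list (Cx * (nat -> Z)).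
Definition evalN (N : nat) (P : laurentN) (s : nat -> Cx) : Cx :=
  fold_right (fun ca acc => Cadd (Cmul (fst ca) (monomial N s (snd ca))) acc) Cx0 P.

(** A rational representation of G on C^n: a matrix of regular functions
    E i j (i, j < n) which is a group homomorphism G -> GL_n(C). *)
Definition rep_mat (N : nat) (E : nat -> nat -> laurentN) (s : nat -> Cx)
  (i j : nat) : Cx := evalN N (E i j) s.
Definition is_rational_rep (N n : nat) (E : nat -> nat -> laurentN) : Prop :=
  (forall s t, in_torus N s -> in_torus N t ->
     forall i j, (i < n)%nat -> (j < n)%nat ->
       rep_mat N E (tmul s t) i j =
       Csum n (fun k => Cmul (rep_mat N E s i k) (rep_mat N E t k j))) /\
  (forall i j, (i < n)%nat -> (j < n)%nat ->
       rep_mat N E tone i j = if Nat.eqb i j then Cx1 else Cx0).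
Definition act (N n : nat) (E : nat -> nat -> laurentN) (s : nat -> Cx)
  (x : nat -> Cx) : nat -> Cx :=
  fun i => Csum n (fun j => Cmul (rep_mat N E s i j) (x j)).

Definition nonzero_vec (n : nat) (x : nat -> Cx) : Prop :=
  exists i, (i < n)%nat /\ x i <> Cx0.
Definition hnorm2 (n : nat) (h : nat -> nat -> Cx) (x : nat -> Cx) : R :=
  Re (Csum n (fun i => Csum n (fun j => Cmul (Cconj (x i)) (Cmul (h i j) (x j))))).
Definition herm_form (n : nat) (h : nat -> nat -> Cx) : Prop :=
  (forall i j, (i < n)%nat -> (j < n)%nat -> h j i = Cconj (h i j)) /\
  (forall x, nonzero_vec n x -> 0 < hnorm2 n h x).

Definition pwv (N nV nW : nat) (EV : nat -> nat -> laurentN) (EW : nat -> nat -> laurentN)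
  (hV hW : nat -> nat -> Cx) (v w : nat -> Cx) (s : nat -> Cx) : R :=
  ln (hnorm2 nW hW (act N nW EW s w) / hnorm2 nW hW w)
  - ln (hnorm2 nV hV (act N nV EV s v) / hnorm2 nV hV v).

(** Algebraic one-parameter subgroups lambda : C^* -> G : each coordinate is a
    regular function on C^* (Laurent polynomial in t), nonvanishing on C^*,
    and lambda is a group homomorphism. *)
Definition laurent1 := list (Cx * Z).
Definition eval1 (P : laurent1) (t : Cx) : Cx :=
  fold_right (fun ck acc => Cadd (Cmul (fst ck) (CpowZ t (snd ck))) acc) Cx0 P.
Definition is_alg_1ps (N : nat) (L : nat -> laurent1) : Prop :=
  (forall t, t <> Cx0 -> forall i, (i < N)%nat -> eval1 (L i) t <> Cx0) /\
  (forall s t, s <> Cx0 -> t <> Cx0 -> forall i, (i < N)%nat ->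
     eval1 (L i) (Cmul s t) = Cmul (eval1 (L i) s) (eval1 (L i) t)).
Definition ops_point (L : nat -> laurent1) (t : Cx) : nat -> Cx :=
  fun i => eval1 (L i) t.

(** Write [y = (log|s_i|^2)_i] for [s] in the torus.
    - Characters [s |-> s^a] of the torus are linearly independent; hence
      every rational representation splits into weight blocks [C_a] with
      [C_a rho(s) = s^a C_a] and [rho(s) = sum_a s^a C_a].
    - Hermitian norms are comparable to the standard one, so for a nonzero
      vector [x] there is a nonempty set [L] of weights (those with
      [C_a x <> 0]) with [log|s.x|^2 = max_(a in L) <a, y> + O(1)].
    - Therefore [p] is unbounded below iff for some direction [y] every
      weight of [w] is strictly beaten by a weight of [v]; such a [y] may be
      rescaled and rounded to an integral cocharacter [z], and the
      one-parameter subgroup [t |-> t^(-z)] drives [p] to [-oo]. *)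

From Stdlib Require Import Reals ZArith List Lra Lia Psatz Classical.
Open Scope R_scope.

Definition Copp (a : Cx) : Cx := mkCx (- Re a) (- Im a).
Definition Csub (a b : Cx) : Cx := Cadd a (Copp b).
Definition Creal (x : R) : Cx := mkCx x 0.

Lemma Cx_ext (a b : Cx) : Re a = Re b -> Im a = Im b -> a = b.
Proof. destruct a, b; simpl; intros; subst; reflexivity. Qed.

Ltac cx := apply Cx_ext; simpl; ring.

Lemma Cx_ring : ring_theory Cx0 Cx1 Cadd Cmul Csub Copp (@eq Cx).
Proof. constructor; intros; cx. Qed.
Add Ring Cx_ring : Cx_ring.

Lemma Csub_eq (x y : Cx) : Csub x y = Cx0 -> x = y.
Proof. intros H. replace x with (Cadd (Csub x y) y) by ring. rewrite H; ring. Qed.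

Lemma Cnorm2_mul (a b : Cx) : Cnorm2 (Cmul a b) = Cnorm2 a * Cnorm2 b.
Proof. destruct a, b; unfold Cnorm2; simpl; ring. Qed.

Lemma Cnorm2_nonneg (a : Cx) : 0 <= Cnorm2 a.
Proof. destruct a; unfold Cnorm2; simpl; nra. Qed.

Lemma Cnorm2_pos (a : Cx) : a <> Cx0 -> 0 < Cnorm2 a.
Proof.
  destruct a as [a1 a2]; intros H; unfold Cnorm2; simpl.
  destruct (Req_dec a1 0), (Req_dec a2 0); subst; try nra.
  exfalso; apply H; reflexivity.
Qed.

Lemma Cnorm2_add (a b : Cx) : Cnorm2 (Cadd a b) <= 2 * Cnorm2 a + 2 * Cnorm2 b.
Proof.
  destruct a as [a1 a2], b as [b1 b2]; unfold Cnorm2; simpl.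
  pose proof (Rle_0_sqr (a1 - b1)); pose proof (Rle_0_sqr (a2 - b2)); unfold Rsqr in *; nra.
Qed.

Lemma Cconj_mul_self (a : Cx) : Cmul (Cconj a) a = Creal (Cnorm2 a).
Proof. destruct a; apply Cx_ext; unfold Cnorm2; simpl; ring. Qed.

Lemma Cconj_mul (a b : Cx) : Cconj (Cmul a b) = Cmul (Cconj a) (Cconj b).
Proof. cx. Qed.

Lemma Cconj_add (a b : Cx) : Cconj (Cadd a b) = Cadd (Cconj a) (Cconj b).
Proof. cx. Qed.

Lemma Cx1_nz : Cx1 <> Cx0.
Proof. intro H; injection H; lra. Qed.

Lemma Cmul_nz (a b : Cx) : a <> Cx0 -> b <> Cx0 -> Cmul a b <> Cx0.
Proof.
  intros Ha Hb E. apply Cnorm2_pos in Ha; apply Cnorm2_pos in Hb.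
  assert (H0 : Cnorm2 (Cmul a b) = 0) by (rewrite E; unfold Cnorm2; simpl; ring).
  rewrite Cnorm2_mul in H0. nra.
Qed.

Lemma Cinv_l (a : Cx) : a <> Cx0 -> Cmul (Cinv a) a = Cx1.
Proof.
  intros H. pose proof (Cnorm2_pos a H). destruct a as [a1 a2].
  unfold Cinv, Cnorm2 in *; simpl in *; apply Cx_ext; simpl; field; lra.
Qed.

Lemma Cinv_nz (a : Cx) : a <> Cx0 -> Cinv a <> Cx0.
Proof.
  intros H E. pose proof (Cinv_l a H) as H1. rewrite E in H1.
  apply Cx1_nz. rewrite <- H1. cx.
Qed.

Lemma Cinv_mul (a b : Cx) : a <> Cx0 -> b <> Cx0 ->
  Cinv (Cmul a b) = Cmul (Cinv a) (Cinv b).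
Proof.
  intros Ha Hb. pose proof (Cnorm2_pos a Ha); pose proof (Cnorm2_pos b Hb).
  pose proof (Cnorm2_mul a b) as Hm. destruct a as [a1 a2], b as [b1 b2].
  unfold Cinv, Cnorm2 in *; simpl in *. rewrite Hm.
  apply Cx_ext; simpl; field; lra.
Qed.

Lemma Cnorm2_inv (a : Cx) : a <> Cx0 -> Cnorm2 (Cinv a) = / Cnorm2 a.
Proof.
  intros H. pose proof (Cnorm2_pos a H).
  assert (H1 : Cnorm2 (Cmul (Cinv a) a) = 1)
    by (rewrite Cinv_l by auto; unfold Cnorm2; simpl; ring).
  rewrite Cnorm2_mul in H1. field_simplify_eq; lra.
Qed.

Lemma Cnorm2_lt_of_Cabs (t : Cx) (d : R) : Cabs t < d -> Cnorm2 t < d * d.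
Proof.
  unfold Cabs; intros H. pose proof (Cnorm2_nonneg t). pose proof (sqrt_pos (Cnorm2 t)).
  rewrite <- (sqrt_sqrt (Cnorm2 t)) by auto. nra.
Qed.

Lemma Cpow_nz (a : Cx) (n : nat) : a <> Cx0 -> Cpow a n <> Cx0.
Proof. intros H; induction n; simpl; [apply Cx1_nz | apply Cmul_nz; auto]. Qed.

Lemma Cpow_mul (a b : Cx) (n : nat) : Cpow (Cmul a b) n = Cmul (Cpow a n) (Cpow b n).
Proof. induction n; simpl; [ring | rewrite IHn; ring]. Qed.

Lemma CpowZ_nz (a : Cx) (z : Z) : a <> Cx0 -> CpowZ a z <> Cx0.
Proof.
  intros H; destruct z; simpl;
    [apply Cx1_nz | apply Cpow_nz; auto | apply Cinv_nz, Cpow_nz; auto].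
Qed.

Lemma CpowZ_mul (a b : Cx) (z : Z) : a <> Cx0 -> b <> Cx0 ->
  CpowZ (Cmul a b) z = Cmul (CpowZ a z) (CpowZ b z).
Proof.
  intros Ha Hb; destruct z; simpl; [ring | apply Cpow_mul |].
  rewrite Cpow_mul, Cinv_mul; auto; apply Cpow_nz; auto.
Qed.

Lemma ln_Cnorm2_Cpow (a : Cx) (n : nat) : a <> Cx0 ->
  ln (Cnorm2 (Cpow a n)) = INR n * ln (Cnorm2 a).
Proof.
  intros H. pose proof (Cnorm2_pos a H). induction n as [|n IH].
  - simpl. unfold Cnorm2; simpl. replace (1 * 1 + 0 * 0) with 1 by ring. rewrite ln_1; ring.
  - simpl Cpow. rewrite Cnorm2_mul, ln_mult, IH, S_INR; auto; [ring|].
    apply Cnorm2_pos, Cpow_nz; auto.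
Qed.

Lemma ln_Cnorm2_CpowZ (a : Cx) (z : Z) : a <> Cx0 ->
  ln (Cnorm2 (CpowZ a z)) = IZR z * ln (Cnorm2 a).
Proof.
  intros H; destruct z as [|p|p]; simpl.
  - unfold Cnorm2; simpl. replace (1 * 1 + 0 * 0) with 1 by ring. rewrite ln_1; ring.
  - rewrite ln_Cnorm2_Cpow, <- positive_nat_Z, <- INR_IZR_INZ; auto.
  - rewrite Cnorm2_inv, ln_Rinv, ln_Cnorm2_Cpow by (auto using Cnorm2_pos, Cpow_nz).
    rewrite <- Pos2Z.opp_pos, opp_IZR, <- positive_nat_Z, <- INR_IZR_INZ; ring.
Qed.

Lemma Cpow_real_exp (c : R) (n : nat) : Cpow (Creal (exp c)) n = Creal (exp (INR n * c)).
Proof.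
  induction n as [|n IH]; simpl Cpow.
  - apply Cx_ext; simpl; [rewrite Rmult_0_l, exp_0|]; auto.
  - rewrite IH, S_INR; apply Cx_ext; simpl; [|ring].
    replace ((INR n + 1) * c) with (c + INR n * c) by ring. rewrite exp_plus; ring.
Qed.

Lemma CpowZ_real_exp (c : R) (z : Z) : CpowZ (Creal (exp c)) z = Creal (exp (IZR z * c)).
Proof.
  destruct z as [|p|p]; simpl CpowZ.
  - apply Cx_ext; simpl; [rewrite Rmult_0_l, exp_0|]; auto.
  - rewrite Cpow_real_exp, <- positive_nat_Z, <- INR_IZR_INZ; auto.
  - rewrite Cpow_real_exp, <- Pos2Z.opp_pos, opp_IZR, <- positive_nat_Z, <- INR_IZR_INZ.
    pose proof (exp_pos (INR (Pos.to_nat p) * c)).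
    replace (- INR (Pos.to_nat p) * c) with (- (INR (Pos.to_nat p) * c)) by ring.
    rewrite exp_Ropp. apply Cx_ext; unfold Cinv, Cnorm2; simpl; field; lra.
Qed.

Fixpoint Rsum (n : nat) (f : nat -> R) : R :=
  match n with O => 0 | S m => Rsum m f + f m end.
Definition Lsum (W : list Z) (f : Z -> Cx) : Cx :=
  fold_right (fun k acc => Cadd (f k) acc) Cx0 W.
Definition RLsum {A : Type} (f : A -> R) (l : list A) : R :=
  fold_right (fun k acc => f k + acc) 0 l.

Lemma Csum_ext n f g : (forall i, (i < n)%nat -> f i = g i) -> Csum n f = Csum n g.
Proof. revert f g; induction n; simpl; intros f g H; auto. rewrite (IHn f g), H; auto. Qed.

Lemma Csum_add n f g : Csum n (fun i => Cadd (f i) (g i)) = Cadd (Csum n f) (Csum n g).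
Proof. induction n; simpl; [ring | rewrite IHn; ring]. Qed.

Lemma Csum_sub n f g : Csum n (fun i => Csub (f i) (g i)) = Csub (Csum n f) (Csum n g).
Proof. induction n; simpl; [ring | rewrite IHn; ring]. Qed.

Lemma Csum_mul_l n c f : Csum n (fun i => Cmul c (f i)) = Cmul c (Csum n f).
Proof. induction n; simpl; [ring | rewrite IHn; ring]. Qed.

Lemma Csum_mul_r n c f : Csum n (fun i => Cmul (f i) c) = Cmul (Csum n f) c.
Proof. induction n; simpl; [ring | rewrite IHn; ring]. Qed.

Lemma Csum_zero n f : (forall i, (i < n)%nat -> f i = Cx0) -> Csum n f = Cx0.
Proof. induction n; simpl; intros H; auto. rewrite IHn, H; auto. ring. Qed.

Lemma Csum_swap n m (f : nat -> nat -> Cx) :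
  Csum n (fun i => Csum m (fun j => f i j)) = Csum m (fun j => Csum n (fun i => f i j)).
Proof.
  induction n; simpl; [symmetry; apply Csum_zero; auto |].
  rewrite IHn, <- Csum_add; auto.
Qed.

Lemma Csum_delta n i x : (i < n)%nat ->
  Csum n (fun j => Cmul (if Nat.eqb i j then Cx1 else Cx0) (x j)) = x i.
Proof.
  induction n; intros Hi; [lia|]. simpl.
  destruct (Nat.eqb_spec i n).
  - subst. rewrite Csum_zero; [ring|]. intros j Hj. destruct (Nat.eqb_spec n j); [lia|ring].
  - rewrite IHn by lia. ring.
Qed.

Lemma Re_Csum n f : Re (Csum n f) = Rsum n (fun i => Re (f i)).
Proof. induction n; simpl; auto. rewrite IHn; auto. Qed.

Lemma Cconj_Csum n f : Cconj (Csum n f) = Csum n (fun i => Cconj (f i)).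
Proof. induction n; simpl; [cx | rewrite Cconj_add, IHn; auto]. Qed.

Lemma Rsum_ext n f g : (forall i, (i < n)%nat -> f i = g i) -> Rsum n f = Rsum n g.
Proof. revert f g; induction n; simpl; intros f g H; auto. rewrite (IHn f g), H; auto. Qed.

Lemma Rsum_le n f g : (forall i, (i < n)%nat -> f i <= g i) -> Rsum n f <= Rsum n g.
Proof.
  induction n; simpl; intros H; [lra|].
  pose proof (IHn ltac:(auto)); pose proof (H n ltac:(lia)); lra.
Qed.

Lemma Rsum_nonneg n f : (forall i, (i < n)%nat -> 0 <= f i) -> 0 <= Rsum n f.
Proof.
  induction n; simpl; intros H; [lra|].
  pose proof (IHn ltac:(auto)); pose proof (H n ltac:(lia)); lra.
Qed.

Lemma Rsum_ge_term n f i : (forall i, (i < n)%nat -> 0 <= f i) -> (i < n)%nat ->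
  f i <= Rsum n f.
Proof.
  induction n; simpl; intros H Hi; [lia|]. destruct (Nat.eq_dec i n).
  - subst. pose proof (Rsum_nonneg n f ltac:(auto)). lra.
  - pose proof (IHn ltac:(auto) ltac:(lia)). pose proof (H n ltac:(lia)). lra.
Qed.

Lemma Rsum_scal n c f : Rsum n (fun i => c * f i) = c * Rsum n f.
Proof. induction n; simpl; [ring | rewrite IHn; ring]. Qed.

Lemma Rsum_scal_r n c f : Rsum n (fun i => f i * c) = Rsum n f * c.
Proof. induction n; simpl; [ring | rewrite IHn; ring]. Qed.

Lemma Rsum_sub n f g : Rsum n (fun i => f i - g i) = Rsum n f - Rsum n g.
Proof. induction n; simpl; [ring | rewrite IHn; ring]. Qed.

Lemma Rsum_abs n f : Rabs (Rsum n f) <= Rsum n (fun i => Rabs (f i)).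
Proof.
  induction n; simpl; [rewrite Rabs_R0; lra|].
  eapply Rle_trans; [apply Rabs_triang|]. lra.
Qed.

Lemma Cnorm2_Csum n f : Cnorm2 (Csum n f) <= 2 ^ n * Rsum n (fun i => Cnorm2 (f i)).
Proof.
  induction n; simpl; [unfold Cnorm2; simpl; lra|].
  pose proof (Cnorm2_add (Csum n f) (f n)). pose proof (Cnorm2_nonneg (f n)).
  assert (1 <= 2 ^ n) by (apply pow_R1_Rle; lra). nra.
Qed.

Lemma Lsum_ext W f g : (forall k, In k W -> f k = g k) -> Lsum W f = Lsum W g.
Proof. revert f g; induction W; simpl; intros f g H; auto. rewrite (IHW f g), H; auto. Qed.

Lemma Lsum_add W f g : Lsum W (fun i => Cadd (f i) (g i)) = Cadd (Lsum W f) (Lsum W g).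
Proof. induction W; simpl; [ring | rewrite IHW; ring]. Qed.

Lemma Lsum_sub W f g : Lsum W (fun i => Csub (f i) (g i)) = Csub (Lsum W f) (Lsum W g).
Proof. induction W; simpl; [ring | rewrite IHW; ring]. Qed.

Lemma Lsum_mul_r W c f : Lsum W (fun i => Cmul (f i) c) = Cmul (Lsum W f) c.
Proof. induction W; simpl; [ring | rewrite IHW; ring]. Qed.

Lemma Lsum_zero W f : (forall k, In k W -> f k = Cx0) -> Lsum W f = Cx0.
Proof. induction W; simpl; intros H; auto. rewrite IHW, H; auto. ring. Qed.

Lemma Lsum_delta W k0 f : NoDup W -> In k0 W ->
  Lsum W (fun k => if Z.eq_dec k0 k then f k else Cx0) = f k0.
Proof.
  induction W as [|a W IH]; simpl; intros HN Hin; [contradiction|]. inversion HN; subst.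
  destruct (Z.eq_dec k0 a).
  - subst. rewrite Lsum_zero; [ring|]. intros k Hk. destruct (Z.eq_dec a k); subst; tauto.
  - destruct Hin; [congruence|]. rewrite IH; auto. ring.
Qed.

Lemma Csum_Lsum n W (f : nat -> Z -> Cx) :
  Csum n (fun i => Lsum W (fun k => f i k)) = Lsum W (fun k => Csum n (fun i => f i k)).
Proof.
  induction n; simpl; [symmetry; apply Lsum_zero; auto|].
  rewrite IHn, <- Lsum_add; auto.
Qed.

Lemma Re_Lsum W f : Re (Lsum W f) = RLsum (fun k => Re (f k)) W.
Proof. induction W; simpl; auto. rewrite IHW; auto. Qed.

Lemma Im_Lsum W f : Im (Lsum W f) = RLsum (fun k => Im (f k)) W.
Proof. induction W; simpl; auto. rewrite IHW; auto. Qed.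

Lemma Cnorm2_Lsum W f :
  Cnorm2 (Lsum W f) <= 2 ^ length W * RLsum (fun k => Cnorm2 (f k)) W.
Proof.
  induction W; simpl; [unfold Cnorm2; simpl; lra|].
  pose proof (Cnorm2_add (f a) (Lsum W f)). pose proof (Cnorm2_nonneg (f a)).
  assert (1 <= 2 ^ length W) by (apply pow_R1_Rle; lra). nra.
Qed.

Lemma RLsum_ext {A} (l : list A) f g : (forall k, In k l -> f k = g k) -> RLsum f l = RLsum g l.
Proof. revert f g; induction l; simpl; intros f g H; auto. rewrite (IHl f g), H; auto. Qed.

Lemma RLsum_nonneg {A} (l : list A) f : (forall k, In k l -> 0 <= f k) -> 0 <= RLsum f l.
Proof.
  induction l; simpl; intros H; [lra|].
  pose proof (IHl ltac:(auto)); pose proof (H a ltac:(auto)); lra.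
Qed.

Lemma RLsum_ge_term {A} (l : list A) f a : (forall k, In k l -> 0 <= f k) -> In a l ->
  f a <= RLsum f l.
Proof.
  induction l as [|b l IH]; simpl; intros H Ha; [contradiction|]. destruct Ha as [<-|Ha].
  - pose proof (RLsum_nonneg l f ltac:(auto)). lra.
  - pose proof (IH ltac:(auto) Ha). pose proof (H b ltac:(auto)). lra.
Qed.

Lemma RLsum_scal {A} (l : list A) c f : RLsum (fun i => c * f i) l = c * RLsum f l.
Proof. induction l; simpl; [ring | rewrite IHl; ring]. Qed.

Lemma RLsum_map {A B} (g : A -> B) (l : list A) f :
  RLsum f (map g l) = RLsum (fun a => f (g a)) l.
Proof. induction l; simpl; auto. rewrite IHl; auto. Qed.

Lemma RLsum_le_len {A} (l : list A) f m : (forall k, In k l -> f k <= m) ->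
  RLsum f l <= INR (length l) * m.
Proof.
  induction l as [|a l IH]; intros H; simpl RLsum; [simpl; lra|].
  pose proof (IH ltac:(simpl in *; auto)). pose proof (H a ltac:(simpl; auto)).
  simpl length; rewrite S_INR. lra.
Qed.

Lemma Rsum_RLsum {A} n (l : list A) (f : nat -> A -> R) :
  Rsum n (fun i => RLsum (fun k => f i k) l) = RLsum (fun k => Rsum n (fun i => f i k)) l.
Proof.
  induction n; simpl.
  - induction l; simpl; auto. rewrite <- IHl; ring.
  - rewrite IHn. clear IHn. induction l; simpl; [ring | rewrite <- IHl; ring].
Qed.

Lemma argmax {A} (l : list A) (f : A -> R) : l <> nil ->
  exists a, In a l /\ forall b, In b l -> f b <= f a.
Proof.
  induction l as [|a l IH]; intros H; [congruence|]. destruct l as [|a' l'].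
  - exists a. split; [simpl; auto|]. intros b [<-|[]]; lra.
  - destruct IH as [m [Hm Hmax]]; [congruence|].
    destruct (Rle_dec (f a) (f m)).
    + exists m. split; [right; auto|]. intros b [<-|Hb]; auto.
    + exists a. split; [left; auto|]. intros b [<-|Hb]; [lra|]. specialize (Hmax b Hb); lra.
Qed.

Lemma uniform_positive {A} (l : list A) (Q : A -> R -> Prop) :
  (forall a c c', Q a c -> 0 < c' -> c' <= c -> Q a c') ->
  (forall a, In a l -> exists c, 0 < c /\ Q a c) ->
  exists c, 0 < c /\ forall a, In a l -> Q a c.
Proof.
  intros Hmon; induction l as [|a l IH]; intros H; [exists 1; split; [lra|intros _ []]|].
  destruct (H a (or_introl eq_refl)) as [c1 [Hc1 Q1]].
  destruct IH as [c2 [Hc2 Q2]]; [intros; apply H; simpl; auto|].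
  exists (Rmin c1 c2). split; [apply Rmin_pos; auto|].
  intros b [<-|Hb].
  - apply (Hmon a c1); auto; [apply Rmin_pos; auto | apply Rmin_l].
  - apply (Hmon b c2); auto; [apply Rmin_pos; auto | apply Rmin_r].
Qed.

Definition pairing (N : nat) (a : nat -> Z) (y : nat -> R) : R :=
  Rsum N (fun i => IZR (a i) * y i).
Definition log_abs2 (s : nat -> Cx) : nat -> R := fun i => ln (Cnorm2 (s i)).

Lemma pairing_scale N a y c : pairing N a (fun i => c * y i) = c * pairing N a y.
Proof. unfold pairing. rewrite <- Rsum_scal. apply Rsum_ext. intros; ring. Qed.

Lemma monomial_ext N s a b : (forall i, (i < N)%nat -> a i = b i) ->
  monomial N s a = monomial N s b.
Proof.
  intros H. unfold monomial. induction N; simpl; auto. rewrite IHN, H; auto.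
Qed.

Lemma monomial_mul N s t a : in_torus N s -> in_torus N t ->
  monomial N (tmul s t) a = Cmul (monomial N s a) (monomial N t a).
Proof.
  unfold monomial, in_torus, tmul. induction N; simpl; intros Hs Ht; [ring|].
  rewrite IHN, CpowZ_mul by auto. ring.
Qed.

Lemma monomial_nz N s a : in_torus N s -> monomial N s a <> Cx0.
Proof.
  unfold monomial, in_torus. induction N; simpl; intros Hs; [apply Cx1_nz|].
  apply Cmul_nz; [apply IHN | apply CpowZ_nz]; auto.
Qed.

Lemma ln_Cnorm2_monomial N s a : in_torus N s ->
  ln (Cnorm2 (monomial N s a)) = pairing N a (log_abs2 s).
Proof.
  intros Hs. unfold pairing, log_abs2. induction N; unfold monomial in *; simpl.
  - unfold Cnorm2; simpl. replace (1 * 1 + 0 * 0) with 1 by ring. apply ln_1.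
  - assert (Hs' : in_torus N s) by (intros i Hi; apply Hs; lia).
    pose proof (Cnorm2_pos _ (monomial_nz N s a Hs')).
    rewrite Cnorm2_mul, ln_mult, IHN, ln_Cnorm2_CpowZ by auto using Cnorm2_pos, CpowZ_nz.
    reflexivity.
Qed.

Lemma Cnorm2_monomial N s a : in_torus N s ->
  Cnorm2 (monomial N s a) = exp (pairing N a (log_abs2 s)).
Proof.
  intros Hs. rewrite <- ln_Cnorm2_monomial, exp_ln; auto.
  apply Cnorm2_pos, monomial_nz; auto.
Qed.

(** ** Linear independence of characters *)

Lemma exp_le_compat (x y : R) : x <= y -> exp x <= exp y.
Proof.
  intros H. destruct (Rle_lt_or_eq_dec _ _ H) as [Hl| ->];
    [left; apply exp_increasing|]; auto; lra.
Qed.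

Lemma ln_le_compat (x y : R) : 0 < x -> x <= y -> ln x <= ln y.
Proof.
  intros Hx H. destruct (Rle_lt_or_eq_dec _ _ H) as [Hl| ->];
    [left; apply ln_increasing|]; auto; lra.
Qed.

Lemma list_min (W : list Z) : W <> nil -> exists m, In m W /\ forall k, In k W -> (m <= k)%Z.
Proof.
  induction W as [|a W IH]; intros H; [congruence|]. destruct W as [|b W'].
  - exists a; simpl; split; auto. intros k [->|[]]; lia.
  - destruct IH as [m [Hm Hk]]; [congruence|].
    destruct (Z.le_gt_cases a m).
    + exists a; split; [left; auto|]. intros k [->|Hk']; [lia|]. specialize (Hk k Hk'); lia.
    + exists m; split; [right; auto|]. intros k [->|Hk']; [lia|]. auto.
Qed.

Lemma NoDup_remove_Z (W : list Z) m : NoDup W -> NoDup (remove Z.eq_dec m W).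
Proof.
  induction W as [|a W IH]; simpl; intros H; [constructor|]. inversion H; subst.
  destruct (Z.eq_dec m a); auto.
  constructor; auto. intro Hin. apply in_remove in Hin. tauto.
Qed.

Lemma RLsum_remove (W : list Z) m f : f m = 0 -> RLsum f W = RLsum f (remove Z.eq_dec m W).
Proof.
  intros Hm; induction W as [|a W IH]; simpl; auto. destruct (Z.eq_dec m a).
  - subst a. rewrite Hm, IH; ring.
  - simpl. rewrite IH; auto.
Qed.

Lemma RLsum_split_at (W : list Z) m g : NoDup W -> In m W ->
  RLsum g W = g m + RLsum (fun k => if Z.eq_dec k m then 0 else g k) W.
Proof.
  induction W as [|a W IH]; simpl; intros HN Hm; [contradiction|]. inversion HN; subst.
  destruct (Z.eq_dec a m).
  - subst. rewrite (RLsum_ext W (fun k => if Z.eq_dec k m then 0 else g k) g).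
    + ring.
    + intros k Hk. destruct (Z.eq_dec k m); subst; tauto.
  - destruct Hm; [congruence|]. rewrite IH; auto. ring.
Qed.

Lemma exp_tail_bound (W : list Z) m d s : s <= 0 -> (forall k, In k W -> (m <= k)%Z) ->
  Rabs (RLsum (fun k => if Z.eq_dec k m then 0 else d k * exp (s * IZR (k - m))) W)
     <= RLsum (fun k => exp s * Rabs (d k)) W.
Proof.
  intros Hs; induction W as [|a W IH]; simpl; intros Hmin; [rewrite Rabs_R0; lra|].
  eapply Rle_trans; [apply Rabs_triang|]. apply Rplus_le_compat; [|apply IH; auto].
  pose proof (Rabs_pos (d a)); pose proof (exp_pos s).
  destruct (Z.eq_dec a m); [rewrite Rabs_R0; nra|].
  rewrite Rabs_mult, (Rabs_right (exp _)) by (apply Rle_ge, Rlt_le, exp_pos).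
  assert (1 <= IZR (a - m)) by (apply IZR_le; specialize (Hmin a (or_introl eq_refl)); lia).
  assert (exp (s * IZR (a - m)) <= exp s) by (apply exp_le_compat; nra).
  nra.
Qed.

Lemma exp_sum_lowest_bound (W : list Z) (d : Z -> R) m : NoDup W -> In m W ->
  (forall k, In k W -> (m <= k)%Z) ->
  (forall s, RLsum (fun k => d k * exp (s * IZR k)) W = 0) ->
  forall s, s <= 0 -> Rabs (d m) <= exp s * RLsum (fun k => Rabs (d k)) W.
Proof.
  intros HN Hm Hmin Hs s Hs0.
  assert (E : RLsum (fun k => d k * exp (s * IZR (k - m))) W = 0).
  { rewrite (RLsum_ext W _ (fun k => exp (- s * IZR m) * (d k * exp (s * IZR k)))).
    - rewrite RLsum_scal, Hs; ring.
    - intros k _.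
      replace (exp (- s * IZR m) * (d k * exp (s * IZR k)))
        with (d k * (exp (- s * IZR m) * exp (s * IZR k))) by ring.
      rewrite <- exp_plus, minus_IZR. f_equal; f_equal; ring. }
  rewrite (RLsum_split_at W m) in E by auto.
  rewrite Z.sub_diag, Rmult_0_r, exp_0, Rmult_1_r in E.
  pose proof (exp_tail_bound W m d s Hs0 Hmin) as Hb. rewrite RLsum_scal in Hb.
  replace (d m) with (- RLsum (fun k => if Z.eq_dec k m then 0
                                        else d k * exp (s * IZR (k - m))) W) by lra.
  rewrite Rabs_Ropp; auto.
Qed.

Lemma exp_sum_lowest_zero (W : list Z) (d : Z -> R) m : NoDup W -> In m W ->
  (forall k, In k W -> (m <= k)%Z) ->
  (forall s, RLsum (fun k => d k * exp (s * IZR k)) W = 0) -> d m = 0.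
Proof.
  intros HN Hm Hmin Hs.
  pose proof (exp_sum_lowest_bound W d m HN Hm Hmin Hs) as HD.
  set (D := RLsum (fun k => Rabs (d k)) W) in HD.
  destruct (Req_dec (d m) 0) as [|Hne]; auto. exfalso.
  pose proof (Rabs_pos_lt _ Hne) as Hp.
  assert (HD0 : Rabs (d m) <= D) by (specialize (HD 0 (Rle_refl 0)); rewrite exp_0 in HD; lra).
  set (s := Rmin 0 (ln (Rabs (d m) / (2 * D)))).
  assert (Hes : exp s <= Rabs (d m) / (2 * D)).
  { rewrite <- (exp_ln (Rabs (d m) / (2 * D))) by (apply Rdiv_lt_0_compat; lra).
    apply exp_le_compat, Rmin_r. }
  specialize (HD s (Rmin_l _ _)).
  assert (exp s * D <= Rabs (d m) / (2 * D) * D) by (apply Rmult_le_compat_r; lra).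
  assert (Rabs (d m) / (2 * D) * D = Rabs (d m) / 2) by (field; lra).
  lra.
Qed.

Lemma exp_sums_independent (W : list Z) (d : Z -> R) : NoDup W ->
  (forall s, RLsum (fun k => d k * exp (s * IZR k)) W = 0) -> forall k, In k W -> d k = 0.
Proof.
  remember (length W) as n eqn:Hn. revert W Hn.
  induction n as [n IH] using (well_founded_induction lt_wf).
  intros W Hn HN Hs k Hk.
  destruct (list_min W) as [m [Hm Hmin]]; [intros ->; contradiction|].
  assert (Hdm : d m = 0) by (apply (exp_sum_lowest_zero W d m); auto).
  destruct (Z.eq_dec k m) as [->|Hkm]; auto.
  apply (IH (length (remove Z.eq_dec m W))) with (W := remove Z.eq_dec m W); auto.
  - subst. apply remove_length_lt; auto.
  - apply NoDup_remove_Z; auto.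
  - intros s. rewrite <- RLsum_remove; auto. rewrite Hdm; ring.
  - apply in_in_remove; auto.
Qed.

(** Exponent vectors with entries bounded by [B] are encoded injectively by
    the integer [sum_i a_i M^i] in base [M = 2B + 1]; along the real curve
    [s |-> (e^(s M^i))_i] the character [a] becomes [s |-> e^(s code(a))]. *)

Fixpoint Zsum (n : nat) (f : nat -> Z) : Z :=
  match n with O => 0%Z | S m => (Zsum m f + f m)%Z end.
Definition code (M : Z) (N : nat) (a : nat -> Z) : Z := Zsum N (fun i => a i * M ^ Z.of_nat i)%Z.
Definition exp_curve (M : Z) (s : R) : nat -> Cx :=
  fun i => Creal (exp (s * IZR (M ^ Z.of_nat i))).

Lemma Zsum_ext N f g : (forall i, (i < N)%nat -> f i = g i) -> Zsum N f = Zsum N g.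
Proof. revert f g; induction N; simpl; intros f g H; auto. rewrite (IHN f g), H; auto. Qed.

Lemma Zsum_sub N f g : (Zsum N f - Zsum N g)%Z = Zsum N (fun i => f i - g i)%Z.
Proof. induction N; simpl; auto. rewrite <- IHN; lia. Qed.

Lemma digits_bound M N c : (1 <= M)%Z -> (forall i, (i < N)%nat -> (Z.abs (c i) <= M - 1)%Z) ->
  (Z.abs (Zsum N (fun i => c i * M ^ Z.of_nat i)) <= M ^ Z.of_nat N - 1)%Z.
Proof.
  intros HM; induction N; intros Hc; cbn [Zsum]; [simpl; lia|].
  replace (M ^ Z.of_nat (S N))%Z with (M ^ Z.of_nat N * M)%Z
    by (rewrite Nat2Z.inj_succ, Z.pow_succ_r by lia; ring).
  pose proof (IHN ltac:(auto)). pose proof (Hc N ltac:(lia)).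
  assert (0 < M ^ Z.of_nat N)%Z by (apply Z.pow_pos_nonneg; lia).
  set (P := (M ^ Z.of_nat N)%Z) in *. set (X := Zsum N _) in *.
  eapply Z.le_trans; [apply Z.abs_triangle|]. rewrite Z.abs_mul, (Z.abs_eq P) by lia. nia.
Qed.

Lemma digits_zero M N c : (1 <= M)%Z -> (forall i, (i < N)%nat -> (Z.abs (c i) <= M - 1)%Z) ->
  Zsum N (fun i => c i * M ^ Z.of_nat i)%Z = 0%Z -> forall i, (i < N)%nat -> c i = 0%Z.
Proof.
  intros HM; induction N; intros Hc H0 i Hi; cbn [Zsum] in *; [lia|].
  pose proof (digits_bound M N c HM ltac:(auto)) as Hb.
  assert (0 < M ^ Z.of_nat N)%Z by (apply Z.pow_pos_nonneg; lia).
  set (P := (M ^ Z.of_nat N)%Z) in *. set (X := Zsum N _) in *.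
  assert (HcN : c N = 0%Z).
  { assert (HX : (X = - (c N * P))%Z) by lia.
    rewrite HX, Z.abs_opp, Z.abs_mul, (Z.abs_eq P) in Hb by lia.
    destruct (Z.eq_dec (c N) 0); auto. nia. }
  destruct (Nat.eq_dec i N) as [->|]; auto.
  apply IHN; auto; [|lia]. unfold X in H0. rewrite HcN in H0. lia.
Qed.

Lemma code_inj M N a b B : (0 <= B)%Z -> M = (2 * B + 1)%Z ->
  (forall i, (i < N)%nat -> Z.abs (a i) <= B /\ Z.abs (b i) <= B)%Z ->
  code M N a = code M N b -> forall i, (i < N)%nat -> a i = b i.
Proof.
  intros HB HM Hab Hcode i Hi. unfold code in Hcode.
  assert (Hdiff : Zsum N (fun i => (a i - b i) * M ^ Z.of_nat i)%Z = 0%Z).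
  { rewrite (Zsum_ext N _ (fun i => a i * M ^ Z.of_nat i - b i * M ^ Z.of_nat i)%Z)
      by (intros; ring).
    rewrite <- Zsum_sub. lia. }
  enough (a i - b i = 0)%Z by lia.
  apply (digits_zero M N (fun i => a i - b i)%Z); auto; [lia|].
  intros j Hj. specialize (Hab j Hj). lia.
Qed.

Lemma exp_curve_torus M s N : in_torus N (exp_curve M s).
Proof.
  intros i _ E. apply (f_equal Re) in E. unfold exp_curve, Creal in E; simpl in E.
  pose proof (exp_pos (s * IZR (M ^ Z.of_nat i))). lra.
Qed.

Lemma monomial_exp_curve M s N a :
  monomial N (exp_curve M s) a = Creal (exp (s * IZR (code M N a))).
Proof.
  unfold monomial, code. induction N; simpl.
  - apply Cx_ext; simpl; auto. rewrite Rmult_0_r, exp_0; auto.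
  - rewrite IHN. unfold exp_curve. rewrite CpowZ_real_exp, plus_IZR, mult_IZR.
    apply Cx_ext; simpl; [|ring].
    rewrite Rmult_0_l, Rminus_0_r, <- exp_plus. f_equal; ring.
Qed.

(** Restrict to the
    curve [exp_curve M] and apply [exp_sums_independent] to real and
    imaginary parts. *)
Lemma characters_independent N M (W : list Z) (R : Z -> nat -> Z) (D : Z -> Cx) :
  NoDup W -> (forall k, In k W -> code M N (R k) = k) ->
  (forall s, in_torus N s -> Lsum W (fun k => Cmul (D k) (monomial N s (R k))) = Cx0) ->
  forall k, In k W -> D k = Cx0.
Proof.
  intros HN Hcode H k Hk.
  assert (Hexp : forall s, Lsum W (fun k => Cmul (D k) (Creal (exp (s * IZR k)))) = Cx0).
  { intros s. rewrite <- (H (exp_curve M s)) by apply exp_curve_torus.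
    apply Lsum_ext. intros k' Hk'. rewrite monomial_exp_curve, Hcode; auto. }
  apply Cx_ext; simpl.
  - apply (exp_sums_independent W (fun k => Re (D k))); auto.
    intros s. specialize (Hexp s). apply (f_equal Re) in Hexp.
    rewrite Re_Lsum in Hexp; simpl in Hexp.
    rewrite <- Hexp. apply RLsum_ext. intros; simpl; ring.
  - apply (exp_sums_independent W (fun k => Im (D k))); auto.
    intros s. specialize (Hexp s). apply (f_equal Im) in Hexp.
    rewrite Im_Lsum in Hexp; simpl in Hexp.
    rewrite <- Hexp. apply RLsum_ext. intros; simpl; ring.
Qed.

(** ** Weight decomposition of a rational representation *)

Fixpoint max_abs_entry (N : nat) (a : nat -> Z) : Z :=
  match N with O => 0%Z | S m => Z.max (max_abs_entry m a) (Z.abs (a m)) end.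
Definition exponent_bound (N : nat) (l : list (nat -> Z)) : Z :=
  fold_right (fun a acc => Z.max (max_abs_entry N a) acc) 0%Z l.

Lemma max_abs_entry_spec N a i : (i < N)%nat -> (Z.abs (a i) <= max_abs_entry N a)%Z.
Proof.
  induction N; simpl; intros Hi; [lia|].
  destruct (Nat.eq_dec i N) as [->|]; [lia|]. pose proof (IHN ltac:(lia)); lia.
Qed.

Lemma exponent_bound_spec N l a i : In a l -> (i < N)%nat ->
  (Z.abs (a i) <= exponent_bound N l)%Z.
Proof.
  induction l as [|b l IH]; simpl; intros Ha Hi; [contradiction|].
  destruct Ha as [->|Ha]; [pose proof (max_abs_entry_spec N a i Hi) | pose proof (IH Ha Hi)]; lia.
Qed.

Lemma exponent_bound_nonneg N l : (0 <= exponent_bound N l)%Z.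
Proof. induction l; simpl; lia. Qed.

Definition coef_at_code (M : Z) (N : nat) (P : laurentN) (k : Z) : Cx :=
  fold_right (fun t acc => if Z.eq_dec (code M N (snd t)) k then Cadd (fst t) acc else acc) Cx0 P.

Lemma evalN_by_codes M N (P : laurentN) s W (R : Z -> nat -> Z) : NoDup W ->
  (forall t, In t P -> In (code M N (snd t)) W) ->
  (forall t, In t P -> monomial N s (snd t) = monomial N s (R (code M N (snd t)))) ->
  evalN N P s = Lsum W (fun k => Cmul (coef_at_code M N P k) (monomial N s (R k))).
Proof.
  induction P as [|t P IH]; intros HN Hin Hm.
  - simpl. symmetry; apply Lsum_zero; intros; simpl; ring.
  - change (evalN N (t :: P) s) with (Cadd (Cmul (fst t) (monomial N s (snd t))) (evalN N P s)).
    assert (IHP : evalN N P s = Lsum W (fun k => Cmul (coef_at_code M N P k) (monomial N s (R k)))).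
    { apply IH; auto; intros t' Ht'; [apply Hin | apply Hm]; right; auto. }
    rewrite IHP.
    rewrite (Lsum_ext W (fun k => Cmul (coef_at_code M N (t :: P) k) (monomial N s (R k)))
                        (fun k => Cadd (if Z.eq_dec (code M N (snd t)) k
                                            then Cmul (fst t) (monomial N s (R k)) else Cx0)
                                         (Cmul (coef_at_code M N P k) (monomial N s (R k))))).
    + rewrite Lsum_add, Lsum_delta by (auto; apply Hin; simpl; auto).
      rewrite (Hm t) by (simpl; auto). reflexivity.
    + intros k _. simpl. destruct (Z.eq_dec (code M N (snd t)) k); ring.
Qed.

Definition mat_apply (n : nat) (P : nat -> nat -> Cx) (x : nat -> Cx) : nat -> Cx :=
  fun i => Csum n (fun j => Cmul (P i j) (x j)).

Section WeightDecomposition.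

Variables (N n : nat) (E : nat -> nat -> laurentN).

(** All exponent vectors occurring in the matrix entries; they are encoded
    injectively by [code code_base N]. *)
Definition rep_exponents : list (nat -> Z) :=
  flat_map (fun i => flat_map (fun j => map snd (E i j)) (seq 0 n)) (seq 0 n).
Definition code_base : Z := (2 * exponent_bound N rep_exponents + 1)%Z.

Definition weight_codes : list Z := nodup Z.eq_dec (map (code code_base N) rep_exponents).
Definition weight_of_code (k : Z) : nat -> Z :=
  match find (fun a => Z.eqb (code code_base N a) k) rep_exponents with
  | Some a => a | None => fun _ => 0%Z end.

Definition weight_block (k : Z) (i j : nat) : Cx := coef_at_code code_base N (E i j) k.

Lemma in_rep_exponents i j t : (i < n)%nat -> (j < n)%nat -> In t (E i j) ->
  In (snd t) rep_exponents.
Proof.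
  intros Hi Hj Ht. unfold rep_exponents. apply in_flat_map. exists i. split; [apply in_seq; lia|].
  apply in_flat_map. exists j. split; [apply in_seq; lia | apply in_map; auto].
Qed.

Lemma weight_of_code_spec a : In a rep_exponents ->
  In (weight_of_code (code code_base N a)) rep_exponents /\
  code code_base N (weight_of_code (code code_base N a)) = code code_base N a.
Proof.
  intros Ha. unfold weight_of_code.
  destruct (find _ _) eqn:F.
  - apply find_some in F. destruct F as [Hin Heq]. apply Z.eqb_eq in Heq. auto.
  - exfalso. eapply find_none in F; eauto. rewrite Z.eqb_refl in F. discriminate.
Qed.

Lemma monomial_weight_of_code a s : In a rep_exponents ->
  monomial N s a = monomial N s (weight_of_code (code code_base N a)).
Proof.
  intros Ha. destruct (weight_of_code_spec a Ha) as [Hin Hcode]. apply monomial_ext.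
  intros i Hi. symmetry.
  apply (code_inj code_base N _ _ (exponent_bound N rep_exponents));
    auto using exponent_bound_nonneg.
  intros j Hj. split; apply exponent_bound_spec; auto.
Qed.

Lemma code_weight_of_code k : In k weight_codes -> code code_base N (weight_of_code k) = k.
Proof.
  intros Hk. unfold weight_codes in Hk. apply nodup_In, in_map_iff in Hk.
  destruct Hk as [a [<- Ha]]. apply weight_of_code_spec; auto.
Qed.

Lemma rep_mat_expansion s i j : (i < n)%nat -> (j < n)%nat ->
  rep_mat N E s i j
  = Lsum weight_codes (fun k => Cmul (weight_block k i j) (monomial N s (weight_of_code k))).
Proof.
  intros Hi Hj. apply evalN_by_codes; [apply NoDup_nodup | |].
  - intros t Ht. apply nodup_In, in_map. apply (in_rep_exponents i j t); auto.
  - intros t Ht. apply monomial_weight_of_code. apply (in_rep_exponents i j t); auto.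
Qed.

Lemma act_expansion x s i : (i < n)%nat ->
  act N n E s x i
  = Lsum weight_codes (fun k => Cmul (monomial N s (weight_of_code k))
                                     (mat_apply n (weight_block k) x i)).
Proof.
  intros Hi. unfold act, mat_apply.
  rewrite (Csum_ext n _ (fun j => Lsum weight_codes (fun k =>
             Cmul (monomial N s (weight_of_code k)) (Cmul (weight_block k i j) (x j))))).
  - rewrite Csum_Lsum. apply Lsum_ext. intros. apply Csum_mul_l.
  - intros j Hj. rewrite rep_mat_expansion by auto. rewrite <- Lsum_mul_r.
    apply Lsum_ext. intros; ring.
Qed.

Hypothesis rep : is_rational_rep N n E.

(** Equivariance of the weight blocks: [C_k rho(t) = t^(a_k) C_k].  Expand
    [rho(s t) = rho(s) rho(t)] in the characters of [s] and compare
    coefficients by [characters_independent]. *)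
Lemma weight_block_equivariant k t i j : In k weight_codes -> in_torus N t ->
  (i < n)%nat -> (j < n)%nat ->
  Csum n (fun l => Cmul (weight_block k i l) (rep_mat N E t l j))
  = Cmul (monomial N t (weight_of_code k)) (weight_block k i j).
Proof.
  intros Hk Ht Hi Hj. destruct rep as [Hhom _].
  set (W := weight_codes). set (R := weight_of_code). set (C := weight_block).
  set (D := fun k => Csub (Cmul (C k i j) (monomial N t (R k)))
                          (Csum n (fun l => Cmul (C k i l) (rep_mat N E t l j)))).
  assert (HD : D k = Cx0).
  { apply (characters_independent N code_base W R D);
      [apply NoDup_nodup | apply code_weight_of_code | | auto].
    intros s Hs.
    pose proof (Hhom s t Hs Ht i j Hi Hj) as Hh.
    rewrite rep_mat_expansion in Hh by auto.
    rewrite (Csum_ext n _ (fun l => Lsum W (fun k =>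
               Cmul (monomial N s (R k)) (Cmul (C k i l) (rep_mat N E t l j))))) in Hh.
    2:{ intros l Hl. rewrite rep_mat_expansion by auto. rewrite <- Lsum_mul_r.
        apply Lsum_ext. intros; fold C R; ring. }
    rewrite Csum_Lsum in Hh.
    unfold D. rewrite (Lsum_ext W _ (fun k => Csub (Cmul (C k i j) (monomial N (tmul s t) (R k)))
        (Csum n (fun l => Cmul (monomial N s (R k)) (Cmul (C k i l) (rep_mat N E t l j)))))).
    - rewrite Lsum_sub. fold C R W in Hh. rewrite Hh. ring.
    - intros k' _. rewrite monomial_mul, Csum_mul_l by auto. ring. }
  apply Csub_eq in HD. unfold D in HD. fold C R. rewrite <- HD. ring.
Qed.

Lemma weight_block_act k x s i : In k weight_codes -> in_torus N s -> (i < n)%nat ->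
  mat_apply n (weight_block k) (act N n E s x) i
  = Cmul (monomial N s (weight_of_code k)) (mat_apply n (weight_block k) x i).
Proof.
  intros Hk Hs Hi. unfold mat_apply, act.
  rewrite (Csum_ext n _ (fun j => Csum n (fun l =>
             Cmul (Cmul (weight_block k i j) (rep_mat N E s j l)) (x l)))).
  - rewrite Csum_swap, <- Csum_mul_l. apply Csum_ext. intros l Hl.
    rewrite Csum_mul_r, weight_block_equivariant by auto. ring.
  - intros. rewrite <- Csum_mul_l. apply Csum_ext. intros; ring.
Qed.

Lemma act_tone x i : (i < n)%nat -> act N n E tone x i = x i.
Proof.
  intros Hi. destruct rep as [_ Hid]. unfold act.
  rewrite (Csum_ext n _ (fun j => Cmul (if Nat.eqb i j then Cx1 else Cx0) (x j))).
  - apply Csum_delta; auto.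
  - intros. rewrite Hid; auto.
Qed.

End WeightDecomposition.

(** ** Hermitian norms are comparable to the standard norm *)

Definition std_norm2 (n : nat) (x : nat -> Cx) : R := Rsum n (fun i => Cnorm2 (x i)).
Definition herm_value (n : nat) (h : nat -> nat -> Cx) (x : nat -> Cx) : Cx :=
  Csum n (fun i => Csum n (fun j => Cmul (Cconj (x i)) (Cmul (h i j) (x j)))).
(** Last row of [h] applied to [x], and the Schur complement of the last
    diagonal entry. *)
Definition last_row (n : nat) (h : nat -> nat -> Cx) (x : nat -> Cx) : Cx :=
  Csum n (fun j => Cmul (h n j) (x j)).
Definition schur (n : nat) (h : nat -> nat -> Cx) : nat -> nat -> Cx :=
  fun i j => Csub (h i j) (Cmul (Cmul (Cconj (h n i)) (h n j)) (Creal (/ Re (h n n)))).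

Lemma std_norm2_nonneg n x : 0 <= std_norm2 n x.
Proof. apply Rsum_nonneg; intros; apply Cnorm2_nonneg. Qed.

Lemma std_norm2_ext n x y : (forall i, (i < n)%nat -> x i = y i) -> std_norm2 n x = std_norm2 n y.
Proof. intros H. apply Rsum_ext. intros. rewrite H; auto. Qed.

Lemma std_norm2_scale n c x : std_norm2 n (fun i => Cmul c (x i)) = Cnorm2 c * std_norm2 n x.
Proof. unfold std_norm2. rewrite <- Rsum_scal. apply Rsum_ext. intros. apply Cnorm2_mul. Qed.

Lemma Cnorm2_le_std n x i : (i < n)%nat -> Cnorm2 (x i) <= std_norm2 n x.
Proof.
  intros Hi. apply (Rsum_ge_term n (fun i => Cnorm2 (x i))); auto. intros; apply Cnorm2_nonneg.
Qed.

Lemma hnorm2_ext n h x y : (forall i, (i < n)%nat -> x i = y i) -> hnorm2 n h x = hnorm2 n h y.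
Proof.
  intros H. unfold hnorm2. f_equal.
  apply Csum_ext. intros. apply Csum_ext. intros. rewrite !H; auto.
Qed.

Lemma herm_value_last n h x : (forall i, (i < n)%nat -> h i n = Cconj (h n i)) ->
  herm_value (S n) h x =
  Cadd (Cadd (herm_value n h x) (Cmul (Cconj (last_row n h x)) (x n)))
       (Cadd (Cmul (Cconj (x n)) (last_row n h x)) (Cmul (h n n) (Creal (Cnorm2 (x n))))).
Proof.
  intros Hh. unfold herm_value. cbn [Csum]. rewrite Csum_add.
  unfold last_row. rewrite Cconj_Csum, <- Csum_mul_r, <- Csum_mul_l, <- Cconj_mul_self.
  rewrite (Csum_ext n (fun i => Cmul (Cconj (x i)) (Cmul (h i n) (x n)))
                      (fun i => Cmul (Cconj (Cmul (h n i) (x i))) (x n))).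
  - ring.
  - intros. rewrite Hh, Cconj_mul by auto. ring.
Qed.

Lemma herm_value_schur n h x :
  herm_value n (schur n h) x
  = Csub (herm_value n h x)
         (Cmul (Cmul (Cconj (last_row n h x)) (last_row n h x)) (Creal (/ Re (h n n)))).
Proof.
  unfold herm_value, schur, last_row.
  rewrite (Csum_ext n _ (fun i => Csub (Csum n (fun j => Cmul (Cconj (x i)) (Cmul (h i j) (x j))))
       (Cmul (Cmul (Cconj (Cmul (h n i) (x i))) (Csum n (fun j => Cmul (h n j) (x j))))
             (Creal (/ Re (h n n)))))).
  - rewrite Csum_sub, Csum_mul_r, Csum_mul_r, Cconj_Csum. reflexivity.
  - intros i _. rewrite <- Csum_mul_l, <- Csum_mul_r, <- Csum_sub. apply Csum_ext.
    intros. rewrite Cconj_mul. ring.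
Qed.

Lemma hnorm2_complete_square n h x : (forall i, (i < n)%nat -> h i n = Cconj (h n i)) ->
  0 < Re (h n n) ->
  hnorm2 (S n) h x = hnorm2 n (schur n h) x +
     Re (h n n) * Cnorm2 (Cadd (x n) (Cmul (Creal (/ Re (h n n))) (last_row n h x))).
Proof.
  intros Hh Hd. unfold hnorm2. fold (herm_value (S n) h x). fold (herm_value n (schur n h) x).
  rewrite herm_value_last, herm_value_schur by auto.
  destruct (last_row n h x) as [b1 b2], (x n) as [a1 a2], (h n n) as [d e].
  simpl in *. unfold Cnorm2, Csub, Copp, Creal; simpl. field. lra.
Qed.

Lemma hnorm2_last_only n h x : (forall i, (i < n)%nat -> h i n = Cconj (h n i)) ->
  (forall i, (i < n)%nat -> x i = Cx0) -> hnorm2 (S n) h x = Re (h n n) * Cnorm2 (x n).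
Proof.
  intros Hh Hx. unfold hnorm2. fold (herm_value (S n) h x). rewrite herm_value_last by auto.
  assert (H1 : herm_value n h x = Cx0).
  { unfold herm_value. apply Csum_zero. intros. rewrite Hx by auto. apply Csum_zero. intros. cx. }
  assert (H2 : last_row n h x = Cx0).
  { unfold last_row. apply Csum_zero. intros. rewrite Hx by auto. ring. }
  rewrite H1, H2. simpl. ring.
Qed.

Lemma Cnorm2_last_row n h x :
  Cnorm2 (last_row n h x) <= 2 ^ n * (Rsum n (fun j => Cnorm2 (h n j)) * std_norm2 n x).
Proof.
  unfold last_row. eapply Rle_trans; [apply Cnorm2_Csum|].
  apply Rmult_le_compat_l; [apply pow_le; lra|].
  unfold std_norm2. rewrite <- Rsum_scal. apply Rsum_le. intros j Hj. rewrite Cnorm2_mul.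
  apply Rmult_le_compat_r; [apply Cnorm2_nonneg|].
  apply (Rsum_ge_term n (fun j => Cnorm2 (h n j))); auto. intros; apply Cnorm2_nonneg.
Qed.

Lemma herm_last_diag_pos n h : (forall i, (i < n)%nat -> h i n = Cconj (h n i)) ->
  (forall x, nonzero_vec (S n) x -> 0 < hnorm2 (S n) h x) -> 0 < Re (h n n).
Proof.
  intros Hh Hp. set (e := fun i => if Nat.eqb i n then Cx1 else Cx0).
  assert (He : 0 < hnorm2 (S n) h e).
  { apply Hp. exists n. split; [lia|]. unfold e. rewrite Nat.eqb_refl. apply Cx1_nz. }
  rewrite hnorm2_last_only in He; auto.
  - unfold e in He. rewrite Nat.eqb_refl in He. unfold Cnorm2 in He; simpl in He. lra.
  - intros i Hi. unfold e. destruct (Nat.eqb_spec i n); [lia|auto].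
Qed.

Lemma schur_herm_form n h :
  (forall i j, (i < S n)%nat -> (j < S n)%nat -> h j i = Cconj (h i j)) ->
  (forall x, nonzero_vec (S n) x -> 0 < hnorm2 (S n) h x) -> herm_form n (schur n h).
Proof.
  intros Hh Hp.
  assert (Hhn : forall i, (i < n)%nat -> h i n = Cconj (h n i)) by (intros; apply Hh; lia).
  pose proof (herm_last_diag_pos n h Hhn Hp) as Hd. set (d := Re (h n n)) in *.
  split.
  - intros i j Hi Hj. unfold schur. rewrite (Hh i j) by lia. cx.
  - intros x' Hx'.
    set (x := fun i => if Nat.eqb i n then Cmul (Creal (- / d)) (last_row n h x') else x' i).
    assert (Hxx : forall i, (i < n)%nat -> x i = x' i).
    { intros i Hi. unfold x. destruct (Nat.eqb_spec i n); [lia|auto]. }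
    assert (Hrow : last_row n h x = last_row n h x').
    { unfold last_row. apply Csum_ext. intros. rewrite Hxx; auto. }
    assert (Hpos : 0 < hnorm2 (S n) h x).
    { apply Hp. destruct Hx' as [i [Hi Hne]]. exists i. split; [lia|]. rewrite Hxx; auto. }
    rewrite hnorm2_complete_square, (hnorm2_ext n _ x x') in Hpos by auto.
    replace (Cadd (x n) (Cmul (Creal (/ Re (h n n))) (last_row n h x))) with Cx0 in Hpos.
    + unfold Cnorm2 in Hpos; simpl in Hpos. lra.
    + rewrite Hrow. unfold x. rewrite Nat.eqb_refl. fold d. cx.
Qed.

Lemma std_norm2_last_bound n h x (d : R) : 0 < d ->
  std_norm2 (S n) x
  <= (1 + 2 * (2 ^ n * Rsum n (fun j => Cnorm2 (h n j))) / (d * d)) * std_norm2 n x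
     + 2 * Cnorm2 (Cadd (x n) (Cmul (Creal (/ d)) (last_row n h x))).
Proof.
  intros Hd. set (t := Cadd (x n) (Cmul (Creal (/ d)) (last_row n h x))).
  set (H0 := Rsum n (fun j => Cnorm2 (h n j))).
  assert (Hxn : Cnorm2 (x n) <= 2 * Cnorm2 t + 2 * (Cnorm2 (last_row n h x) / (d * d))).
  { replace (x n) with (Cadd t (Cmul (Creal (- / d)) (last_row n h x))) by (unfold t; cx).
    eapply Rle_trans; [apply Cnorm2_add|]. rewrite Cnorm2_mul.
    unfold Creal, Cnorm2 at 2; simpl. right. field. lra. }
  pose proof (Cnorm2_last_row n h x) as Hrow. fold H0 in Hrow.
  assert (Cnorm2 (last_row n h x) / (d * d) <= 2 ^ n * H0 * std_norm2 n x / (d * d)).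
  { apply Rmult_le_compat_r; [left; apply Rinv_0_lt_compat; nra | lra]. }
  assert (2 * (2 ^ n * H0) / (d * d) * std_norm2 n x = 2 * (2 ^ n * H0 * std_norm2 n x / (d * d)))
    by (field; lra).
  unfold std_norm2 at 1; cbn [Rsum]. fold (std_norm2 n x). nra.
Qed.

(** Lower bound: [c |x|^2 <= |x|_h^2] for some [c > 0], by induction on the
    dimension through the Schur complement. *)
Lemma herm_norm_lower_bound n h : herm_form n h ->
  exists c, 0 < c /\ forall x, c * std_norm2 n x <= hnorm2 n h x.
Proof.
  revert h; induction n; intros h [Hh Hp].
  - exists 1. split; [lra|]. intros. unfold std_norm2, hnorm2; simpl. lra.
  - assert (Hhn : forall i, (i < n)%nat -> h i n = Cconj (h n i)) by (intros; apply Hh; lia).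
    pose proof (herm_last_diag_pos n h Hhn Hp) as Hd. set (d := Re (h n n)) in *.
    destruct (IHn (schur n h) (schur_herm_form n h Hh Hp)) as [c' [Hc' Hb']].
    set (A := 1 + 2 * (2 ^ n * Rsum n (fun j => Cnorm2 (h n j))) / (d * d)).
    assert (HA : 1 <= A).
    { assert (0 <= Rsum n (fun j => Cnorm2 (h n j)))
        by (apply Rsum_nonneg; intros; apply Cnorm2_nonneg).
      assert (0 <= 2 * (2 ^ n * Rsum n (fun j => Cnorm2 (h n j))) / (d * d)).
      { unfold Rdiv. apply Rmult_le_pos; [pose proof (pow_le 2 n ltac:(lra)); nra|].
        left; apply Rinv_0_lt_compat; nra. }
      unfold A; lra. }
    set (c := Rmin (c' / A) (d / 2)).
    assert (Hc : 0 < c) by (apply Rmin_pos; [apply Rdiv_lt_0_compat|]; lra).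
    assert (HcA : c * A <= c').
    { apply Rmult_le_reg_r with (/ A); [apply Rinv_0_lt_compat; lra|].
      replace (c * A * / A) with c by (field; lra). apply Rmin_l. }
    exists c. split; auto. intros x.
    rewrite hnorm2_complete_square by auto. fold d.
    pose proof (std_norm2_last_bound n h x d Hd) as Hstd. fold A in Hstd.
    set (t := Cadd (x n) (Cmul (Creal (/ d)) (last_row n h x))) in *.
    pose proof (Hb' x). pose proof (std_norm2_nonneg n x). pose proof (Cnorm2_nonneg t).
    pose proof (Rmin_r (c' / A) (d / 2)). fold c in H2.
    assert (c * std_norm2 (S n) x <= c * (A * std_norm2 n x + 2 * Cnorm2 t))
      by (apply Rmult_le_compat_l; lra).
    nra.
Qed.

Lemma Re_term_bound a h b :
  Re (Cmul (Cconj a) (Cmul h b)) <= (Rabs (Re h) + Rabs (Im h)) * (Cnorm2 a + Cnorm2 b).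
Proof.
  destruct a as [a1 a2], h as [h1 h2], b as [b1 b2]; unfold Cnorm2; simpl.
  set (X := a1 * b1 + a2 * b2). set (Y := a2 * b1 - a1 * b2).
  replace (a1 * (h1 * b1 - h2 * b2) - - a2 * (h1 * b2 + h2 * b1)) with (h1 * X + h2 * Y)
    by (unfold X, Y; ring).
  set (S := a1 * a1 + a2 * a2 + (b1 * b1 + b2 * b2)).
  pose proof (Rle_0_sqr (a1 - b1)); pose proof (Rle_0_sqr (a1 + b1));
  pose proof (Rle_0_sqr (a2 - b2)); pose proof (Rle_0_sqr (a2 + b2));
  pose proof (Rle_0_sqr (a2 - b1)); pose proof (Rle_0_sqr (a2 + b1));
  pose proof (Rle_0_sqr (a1 - b2)); pose proof (Rle_0_sqr (a1 + b2)); unfold Rsqr in *.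
  assert (Rabs X <= S) by (unfold X, S; apply Rabs_le; split; lra).
  assert (Rabs Y <= S) by (unfold Y, S; apply Rabs_le; split; lra).
  assert (h1 * X <= Rabs h1 * S).
  { eapply Rle_trans; [apply Rle_abs|]. rewrite Rabs_mult.
    apply Rmult_le_compat_l; auto; apply Rabs_pos. }
  assert (h2 * Y <= Rabs h2 * S).
  { eapply Rle_trans; [apply Rle_abs|]. rewrite Rabs_mult.
    apply Rmult_le_compat_l; auto; apply Rabs_pos. }
  lra.
Qed.

Lemma herm_norm_upper_bound n h : exists C, 0 <= C /\ forall x, hnorm2 n h x <= C * std_norm2 n x.
Proof.
  set (Hs := Rsum n (fun i => Rsum n (fun j => Rabs (Re (h i j)) + Rabs (Im (h i j))))).
  assert (0 <= Hs).
  { apply Rsum_nonneg; intros; apply Rsum_nonneg; intros.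
    pose proof (Rabs_pos (Re (h i i0))); pose proof (Rabs_pos (Im (h i i0))); lra. }
  exists (2 * Hs). split; [lra|]. intros x.
  unfold hnorm2. rewrite Re_Csum.
  rewrite Rmult_assoc, (Rmult_comm Hs), <- Rmult_assoc. unfold Hs. rewrite <- Rsum_scal.
  apply Rsum_le. intros i Hi.
  rewrite Re_Csum, <- Rsum_scal. apply Rsum_le. intros j Hj.
  eapply Rle_trans; [apply Re_term_bound|].
  pose proof (Cnorm2_le_std n x i Hi). pose proof (Cnorm2_le_std n x j Hj).
  pose proof (Rabs_pos (Re (h i j))); pose proof (Rabs_pos (Im (h i j))).
  nra.
Qed.

(** ** The orbit estimate

    For a nonzero vector [x], let [L] be the set of weights [a_k] with
    [C_k x <> 0]. *)

Definition orbit_estimate (N n : nat) (E : nat -> nat -> laurentN) (h : nat -> nat -> Cx)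
  (x : nat -> Cx) (L : list (nat -> Z)) (c1 C2 : R) : Prop :=
  L <> nil /\ 0 < c1 /\ 0 <= C2 /\ forall s, in_torus N s ->
    (forall a, In a L -> c1 * Cnorm2 (monomial N s a) <= hnorm2 n h (act N n E s x)) /\
    hnorm2 n h (act N n E s x) <= C2 * RLsum (fun a => Cnorm2 (monomial N s a)) L.

Lemma std_norm2_mat_apply n P x :
  std_norm2 n (mat_apply n P x)
  <= 2 ^ n * Rsum n (fun i => Rsum n (fun j => Cnorm2 (P i j))) * std_norm2 n x.
Proof.
  replace (2 ^ n * Rsum n (fun i => Rsum n (fun j => Cnorm2 (P i j))) * std_norm2 n x) with
    (Rsum n (fun i => 2 ^ n * (Rsum n (fun j => Cnorm2 (P i j)) * std_norm2 n x)))
    by (rewrite Rsum_scal, Rsum_scal_r; ring).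
  unfold std_norm2 at 1, mat_apply. apply Rsum_le. intros i Hi.
  eapply Rle_trans; [apply Cnorm2_Csum|]. apply Rmult_le_compat_l; [apply pow_le; lra|].
  rewrite <- Rsum_scal_r. apply Rsum_le. intros j Hj. rewrite Cnorm2_mul.
  apply Rmult_le_compat_l; [apply Cnorm2_nonneg | apply Cnorm2_le_std; auto].
Qed.

Lemma RLsum_filter_bound (W : list Z) (m g : Z -> R) (p : Z -> bool) S :
  (forall k, In k W -> 0 <= m k) -> (forall k, In k W -> g k <= S) ->
  (forall k, In k W -> p k = false -> g k = 0) ->
  RLsum (fun k => m k * g k) W <= S * RLsum m (filter p W).
Proof.
  induction W as [|a W IH]; simpl; intros Hm Hg Hp; [lra|].
  pose proof (IH ltac:(auto) ltac:(auto) ltac:(auto)).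
  destruct (p a) eqn:Pa; simpl.
  - pose proof (Hm a ltac:(auto)). pose proof (Hg a ltac:(auto)). nra.
  - rewrite (Hp a ltac:(auto) Pa). lra.
Qed.

Section OrbitEstimate.

Variables (N n : nat) (E : nat -> nat -> laurentN) (h : nat -> nat -> Cx) (x : nat -> Cx).
Hypotheses (rep : is_rational_rep N n E) (herm : herm_form n h) (x_nonzero : nonzero_vec n x).

Definition weight_component (k : Z) : nat -> Cx := mat_apply n (weight_block N n E k) x.
Definition weight_support : list Z :=
  filter (fun k => if Rlt_dec 0 (std_norm2 n (weight_component k)) then true else false)
         (weight_codes N n E).
Definition orbit_weights : list (nat -> Z) := map (weight_of_code N n E) weight_support.

Lemma orbit_upper : exists C2, 0 <= C2 /\ forall s, in_torus N s ->
  hnorm2 n h (act N n E s x) <= C2 * RLsum (fun a => Cnorm2 (monomial N s a)) orbit_weights.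
Proof.
  destruct (herm_norm_upper_bound n h) as [Cu [HCu Hup]].
  set (W := weight_codes N n E). set (u := weight_component).
  set (S := RLsum (fun k => std_norm2 n (u k)) W).
  assert (HS : forall k, In k W -> std_norm2 n (u k) <= S).
  { intros. apply (RLsum_ge_term W (fun k => std_norm2 n (u k))); auto.
    intros; apply std_norm2_nonneg. }
  assert (HS0 : 0 <= S) by (apply RLsum_nonneg; intros; apply std_norm2_nonneg).
  exists (Cu * (2 ^ length W * S)). split.
  { apply Rmult_le_pos; [auto | apply Rmult_le_pos; [apply pow_le; lra | auto]]. }
  intros s Hs. eapply Rle_trans; [apply Hup|]. rewrite Rmult_assoc. apply Rmult_le_compat_l; auto.
  rewrite (std_norm2_ext n _
             (fun i => Lsum W (fun k => Cmul (monomial N s (weight_of_code N n E k)) (u k i))))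
    by (intros; apply act_expansion; auto).
  unfold std_norm2 at 1. eapply Rle_trans; [apply Rsum_le; intros; apply Cnorm2_Lsum|].
  rewrite Rsum_scal, Rmult_assoc. apply Rmult_le_compat_l; [apply pow_le; lra|].
  rewrite Rsum_RLsum.
  rewrite (RLsum_ext W _
             (fun k => Cnorm2 (monomial N s (weight_of_code N n E k)) * std_norm2 n (u k))).
  2:{ intros. unfold std_norm2. rewrite <- Rsum_scal. apply Rsum_ext. intros. apply Cnorm2_mul. }
  unfold orbit_weights. rewrite RLsum_map. apply RLsum_filter_bound; auto.
  - intros; apply Cnorm2_nonneg.
  - intros k _ Hpk. cbv beta in Hpk. unfold u.
    destruct (Rlt_dec 0 (std_norm2 n (weight_component k))); [discriminate|].
    pose proof (std_norm2_nonneg n (weight_component k)). lra.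
Qed.

(** Each weight of the support bounds the orbit from below: applying [C_k]
    to [s.x] gives [s^(a_k) C_k x], of size at least [|s^(a_k)|^2 |C_k x|^2]. *)
Lemma orbit_lower_weight k : In k weight_support -> exists c, 0 < c /\ forall s, in_torus N s ->
  c * Cnorm2 (monomial N s (weight_of_code N n E k)) <= hnorm2 n h (act N n E s x).
Proof.
  intros Hk. unfold weight_support in Hk. apply filter_In in Hk. destruct Hk as [HkW Hpk].
  destruct (Rlt_dec 0 (std_norm2 n (weight_component k))) as [Hsu|]; [|discriminate].
  destruct (herm_norm_lower_bound n h herm) as [c [Hc Hlow]].
  set (C := weight_block N n E k). set (u := weight_component k) in *.
  set (Pk := 2 ^ n * Rsum n (fun i => Rsum n (fun j => Cnorm2 (C i j))) + 1).
  assert (HPk : 0 < Pk).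
  { assert (0 <= 2 ^ n * Rsum n (fun i => Rsum n (fun j => Cnorm2 (C i j)))).
    { apply Rmult_le_pos; [apply pow_le; lra|].
      apply Rsum_nonneg; intros; apply Rsum_nonneg; intros; apply Cnorm2_nonneg. }
    unfold Pk; lra. }
  exists (c * std_norm2 n u / Pk). split; [apply Rdiv_lt_0_compat; nra|].
  intros s Hs. set (chi := monomial N s (weight_of_code N n E k)). set (m := Cnorm2 chi).
  assert (Hm0 : 0 <= m) by apply Cnorm2_nonneg.
  pose proof (std_norm2_mat_apply n C (act N n E s x)) as Hm.
  rewrite (std_norm2_ext n _ (fun i => Cmul chi (u i))), std_norm2_scale in Hm
    by (intros; apply weight_block_act; auto).
  fold m in Hm. pose proof (Hlow (act N n E s x)). pose proof (std_norm2_nonneg n (act N n E s x)).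
  assert (m * std_norm2 n u <= Pk * std_norm2 n (act N n E s x)) by (unfold Pk; nra).
  apply Rmult_le_reg_r with Pk; auto.
  replace (c * std_norm2 n u / Pk * m * Pk) with (c * (m * std_norm2 n u)) by (field; lra).
  nra.
Qed.

(** The support is nonempty, otherwise the upper bound at [s = 1] would give [|x|_h = 0]. *)
Lemma orbit_weights_nonempty : orbit_weights <> nil.
Proof.
  intro Hnil. destruct orbit_upper as [C2 [_ HC2]].
  pose proof (HC2 tone ltac:(intros i _; apply Cx1_nz)) as H1.
  rewrite Hnil in H1. simpl in H1.
  rewrite (hnorm2_ext n h _ x) in H1 by (intros; apply act_tone; auto).
  destruct herm as [_ Hp]. specialize (Hp x x_nonzero). lra.
Qed.

Lemma orbit_estimate_exists : exists L c1 C2, orbit_estimate N n E h x L c1 C2.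
Proof.
  destruct orbit_upper as [C2 [HC2 Hup]].
  destruct (uniform_positive orbit_weights (fun a c => forall s, in_torus N s ->
              c * Cnorm2 (monomial N s a) <= hnorm2 n h (act N n E s x))) as [c1 [Hc1 Hlow]].
  - intros a c0 c' Hq Hc' Hle s Hs. eapply Rle_trans; [|apply (Hq s Hs)].
    apply Rmult_le_compat_r; auto. apply Cnorm2_nonneg.
  - intros a Ha. apply in_map_iff in Ha. destruct Ha as [k [<- Hk]]. apply orbit_lower_weight; auto.
  - exists orbit_weights, c1, C2.
    repeat split; auto using orbit_weights_nonempty.
Qed.

End OrbitEstimate.

Section OrbitLogBounds.

Variables (N n : nat) (E : nat -> nat -> laurentN) (h : nat -> nat -> Cx) (x : nat -> Cx).
Variables (L : list (nat -> Z)) (c1 C2 : R).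
Hypothesis est : orbit_estimate N n E h x L c1 C2.

Lemma orbit_norm_pos s : in_torus N s -> 0 < hnorm2 n h (act N n E s x).
Proof.
  intros Hs. destruct est as [Hne [Hc1 [_ H]]]. destruct L as [|a L']; [congruence|].
  destruct (H s Hs) as [Hl _]. specialize (Hl a (or_introl eq_refl)).
  pose proof (Cnorm2_pos _ (monomial_nz N s a Hs)). nra.
Qed.

Lemma orbit_log_lower s a : in_torus N s -> In a L ->
  ln c1 + pairing N a (log_abs2 s) <= ln (hnorm2 n h (act N n E s x)).
Proof.
  intros Hs Ha. destruct est as [_ [Hc1 [_ H]]]. destruct (H s Hs) as [Hl _].
  specialize (Hl a Ha). rewrite Cnorm2_monomial in Hl by auto.
  rewrite <- (ln_exp (pairing N a (log_abs2 s))), <- ln_mult by (auto; apply exp_pos).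
  apply ln_le_compat; auto. apply Rmult_lt_0_compat; auto; apply exp_pos.
Qed.

Lemma orbit_log_upper s a : in_torus N s -> In a L ->
  (forall b, In b L -> pairing N b (log_abs2 s) <= pairing N a (log_abs2 s)) ->
  ln (hnorm2 n h (act N n E s x)) <= ln ((C2 + 1) * INR (length L)) + pairing N a (log_abs2 s).
Proof.
  intros Hs Ha Hmax. pose proof (orbit_norm_pos s Hs).
  destruct est as [Hne [Hc1 [HC2 HH]]]. destruct (HH s Hs) as [_ Hu].
  assert (Hlen : 0 < INR (length L)).
  { destruct L as [|b L']; [congruence|].
    simpl length; rewrite S_INR; pose proof (pos_INR (length L')); lra. }
  rewrite <- (ln_exp (pairing N a (log_abs2 s))), <- ln_mult by (try apply exp_pos; nra).
  apply ln_le_compat; auto.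
  assert (RLsum (fun a => Cnorm2 (monomial N s a)) L
          <= INR (length L) * exp (pairing N a (log_abs2 s))).
  { apply RLsum_le_len. intros k Hk. rewrite Cnorm2_monomial by auto. apply exp_le_compat; auto. }
  assert (0 <= RLsum (fun a => Cnorm2 (monomial N s a)) L)
    by (apply RLsum_nonneg; intros; apply Cnorm2_nonneg).
  pose proof (exp_pos (pairing N a (log_abs2 s))). nra.
Qed.

End OrbitLogBounds.

(** ** Dominated weights and rounding to a cocharacter *)

Definition dominated (N : nat) (Lw Lv : list (nat -> Z)) (y : nat -> R) (e : R) : Prop :=
  forall a, In a Lw -> exists b, In b Lv /\ pairing N a y + e <= pairing N b y.

Lemma dominated_margin N Lw Lv y :
  (forall a, In a Lw -> exists b, In b Lv /\ pairing N a y < pairing N b y) ->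
  exists e, 0 < e /\ dominated N Lw Lv y e.
Proof.
  intros H.
  apply (uniform_positive Lw (fun a e => exists b, In b Lv /\ pairing N a y + e <= pairing N b y)).
  - intros a c c' [b [Hb Hl]] Hc' Hle. exists b; split; auto; lra.
  - intros a Ha. destruct (H a Ha) as [b [Hb Hl]].
    exists (pairing N b y - pairing N a y). split; [lra|]. exists b; split; auto; lra.
Qed.

Lemma pairing_perturb N a y y' D : (forall i, (i < N)%nat -> Rabs (y' i - D * y i) <= 1) ->
  Rabs (pairing N a y' - D * pairing N a y) <= Rsum N (fun i => Rabs (IZR (a i))).
Proof.
  intros H. unfold pairing. rewrite <- Rsum_scal, <- Rsum_sub.
  eapply Rle_trans; [apply Rsum_abs|]. apply Rsum_le. intros i Hi.
  replace (IZR (a i) * y' i - D * (IZR (a i) * y i)) with (IZR (a i) * (y' i - D * y i)) by ring.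
  rewrite Rabs_mult. pose proof (H i Hi). pose proof (Rabs_pos (IZR (a i))). nra.
Qed.

Lemma Rabs_le_bounds (x a : R) : Rabs x <= a -> - a <= x <= a.
Proof.
  intros H. pose proof (Rle_abs x). pose proof (Rle_abs (- x)). rewrite Rabs_Ropp in *. lra.
Qed.

(** Rounding: domination with a positive margin in a real direction yields
    domination with margin [1] in an integral direction (rescale [y] so the
    margin exceeds the rounding errors, then take integer parts). *)
Lemma dominated_integral N Lw Lv y e : 0 < e -> dominated N Lw Lv y e ->
  exists z : nat -> Z, dominated N Lw Lv (fun i => IZR (z i)) 1.
Proof.
  intros He HB.
  set (Lb := RLsum (fun a => Rsum N (fun i => Rabs (IZR (a i)))) (Lw ++ Lv)).
  assert (HLb : forall a, In a (Lw ++ Lv) -> Rsum N (fun i => Rabs (IZR (a i))) <= Lb).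
  { intros. apply (RLsum_ge_term (Lw ++ Lv) (fun a => Rsum N (fun i => Rabs (IZR (a i))))); auto.
    intros; apply Rsum_nonneg; intros; apply Rabs_pos. }
  assert (HLb0 : 0 <= Lb)
    by (apply RLsum_nonneg; intros; apply Rsum_nonneg; intros; apply Rabs_pos).
  set (D := (2 * Lb + 1) / e).
  exists (fun i => Int_part (D * y i)).
  assert (Hp : forall i, (i < N)%nat -> Rabs (IZR (Int_part (D * y i)) - D * y i) <= 1).
  { intros. destruct (base_Int_part (D * y i)). apply Rabs_le; split; lra. }
  intros a Ha. destruct (HB a Ha) as [b [Hb Hab]]. exists b. split; auto.
  pose proof (pairing_perturb N a y _ D Hp) as Pa. pose proof (pairing_perturb N b y _ D Hp) as Pb.
  pose proof (HLb a ltac:(apply in_or_app; auto)). pose proof (HLb b ltac:(apply in_or_app; auto)).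
  apply Rabs_le_bounds in Pa. apply Rabs_le_bounds in Pb.
  assert (D * e = 2 * Lb + 1) by (unfold D; field; lra).
  assert (0 < D) by (unfold D; apply Rdiv_lt_0_compat; lra).
  assert (D * pairing N a y + D * e <= D * pairing N b y) by nra.
  lra.
Qed.

Lemma undominated_maximiser N Lw Lv :
  ~ (exists z : nat -> Z, dominated N Lw Lv (fun i => IZR (z i)) 1) ->
  forall y, exists a, In a Lw /\ forall b, In b Lv -> pairing N b y <= pairing N a y.
Proof.
  intros Hno y. apply NNPP. intros Hn. apply Hno.
  destruct (dominated_margin N Lw Lv y) as [e [He HB]].
  - intros a Ha. apply NNPP. intros Hn2. apply Hn. exists a. split; auto.
    intros b Hb. apply Rnot_lt_le. intros Hlt. apply Hn2. exists b; auto.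
  - apply (dominated_integral N Lw Lv y e He HB).
Qed.

Lemma ln_div (x y : R) : 0 < x -> 0 < y -> ln (x / y) = ln x - ln y.
Proof. intros. unfold Rdiv. rewrite ln_mult, ln_Rinv by auto using Rinv_0_lt_compat. ring. Qed.

Definition cocharacter (z : nat -> Z) : nat -> laurent1 := fun i => (Cx1, (- z i)%Z) :: nil.

Lemma eval1_cocharacter z i t : eval1 (cocharacter z i) t = CpowZ t (- z i).
Proof. unfold eval1, cocharacter; simpl. ring. Qed.

Lemma cocharacter_is_alg_1ps N z : is_alg_1ps N (cocharacter z).
Proof.
  split.
  - intros t Ht i Hi. rewrite eval1_cocharacter. apply CpowZ_nz; auto.
  - intros s t Hs Ht i Hi. rewrite !eval1_cocharacter. apply CpowZ_mul; auto.
Qed.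

Lemma pairing_cocharacter N z a t : t <> Cx0 ->
  pairing N a (log_abs2 (ops_point (cocharacter z) t))
  = - ln (Cnorm2 t) * pairing N a (fun i => IZR (z i)).
Proof.
  intros Ht. rewrite <- pairing_scale. unfold pairing. apply Rsum_ext. intros i _.
  unfold log_abs2, ops_point. rewrite eval1_cocharacter, ln_Cnorm2_CpowZ, opp_IZR by auto. ring.
Qed.

Lemma small_modulus_log (K : R) : exists delta, 0 < delta /\ forall t : Cx,
  0 < Cabs t < delta -> t <> Cx0 /\ ln (Cnorm2 t) < 0 /\ ln (Cnorm2 t) < K.
Proof.
  set (d := Rmin 1 (exp (K / 2))).
  assert (Hd : 0 < d) by (apply Rmin_pos; [lra | apply exp_pos]).
  exists d. split; auto. intros t [Ht0 Htd].
  assert (Htnz : t <> Cx0).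
  { intros ->. unfold Cabs, Cnorm2 in Ht0; simpl in Ht0.
    rewrite Rmult_0_l, Rplus_0_l, sqrt_0 in Ht0. lra. }
  split; auto.
  assert (Hu : ln (Cnorm2 t) < ln d + ln d).
  { rewrite <- ln_mult by auto. apply ln_increasing; auto using Cnorm2_pos, Cnorm2_lt_of_Cabs. }
  assert (ln d <= 0) by (rewrite <- ln_1; apply ln_le_compat; [auto | apply Rmin_l]).
  assert (ln d <= K / 2).
  { rewrite <- (ln_exp (K / 2)). apply ln_le_compat; [auto | apply Rmin_r]. }
  lra.
Qed.

Section AlongTheTorus.

Variables (N nV nW : nat) (EV EW : nat -> nat -> laurentN) (hV hW : nat -> nat -> Cx).
Variables (v w : nat -> Cx) (Lv Lw : list (nat -> Z)) (c1v C2v c1w C2w : R).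
Hypotheses (estV : orbit_estimate N nV EV hV v Lv c1v C2v)
           (estW : orbit_estimate N nW EW hW w Lw c1w C2w)
           (v_pos : 0 < hnorm2 nV hV v) (w_pos : 0 < hnorm2 nW hW w).

Let p (s : nat -> Cx) : R := pwv N nV nW EV EW hV hW v w s.

Lemma pwv_log_form s : in_torus N s ->
  p s = ln (hnorm2 nW hW (act N nW EW s w)) - ln (hnorm2 nW hW w)
        - (ln (hnorm2 nV hV (act N nV EV s v)) - ln (hnorm2 nV hV v)).
Proof.
  intros Hs. unfold p, pwv.
  rewrite !ln_div; eauto using orbit_norm_pos.
Qed.

Lemma pwv_bounded_below :
  (forall y, exists a, In a Lw /\ forall b, In b Lv -> pairing N b y <= pairing N a y) ->
  exists K0, forall s, in_torus N s -> K0 <= p s.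
Proof.
  intros Hgood.
  exists (ln c1w - ln (hnorm2 nW hW w) - ln ((C2v + 1) * INR (length Lv)) + ln (hnorm2 nV hV v)).
  intros s Hs.
  destruct (Hgood (log_abs2 s)) as [a [Ha Hab]].
  destruct (argmax Lv (fun b => pairing N b (log_abs2 s))) as [b [Hb Hmax]]; [apply estV|].
  pose proof (orbit_log_lower N nW EW hW w Lw c1w C2w estW s a Hs Ha).
  pose proof (orbit_log_upper N nV EV hV v Lv c1v C2v estV s b Hs Hb Hmax).
  pose proof (Hab b Hb).
  rewrite pwv_log_form by auto. lra.
Qed.

Lemma pwv_along_cocharacter z : dominated N Lw Lv (fun i => IZR (z i)) 1 ->
  forall M, exists delta, 0 < delta /\ forall t : Cx, 0 < Cabs t < delta ->
    p (ops_point (cocharacter z) t) < M.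
Proof.
  intros Hz M.
  set (K1 := ln ((C2w + 1) * INR (length Lw)) - ln (hnorm2 nW hW w) - ln c1v + ln (hnorm2 nV hV v)).
  destruct (small_modulus_log (M - K1)) as [delta [Hd Hsmall]].
  exists delta. split; auto. intros t Ht.
  destruct (Hsmall t Ht) as [Htnz [Hu0 Hu]].
  set (s := ops_point (cocharacter z) t).
  assert (Hs : in_torus N s).
  { intros i Hi. unfold s, ops_point. rewrite eval1_cocharacter. apply CpowZ_nz; auto. }
  destruct (argmax Lw (fun a => pairing N a (log_abs2 s))) as [a [Ha Hmax]]; [apply estW|].
  destruct (Hz a Ha) as [b [Hb Hab]].
  pose proof (orbit_log_upper N nW EW hW w Lw c1w C2w estW s a Hs Ha Hmax).
  pose proof (orbit_log_lower N nV EV hV v Lv c1v C2v estV s b Hs Hb).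
  assert (pairing N a (log_abs2 s) + - ln (Cnorm2 t) <= pairing N b (log_abs2 s)).
  { unfold s. rewrite !pairing_cocharacter by auto. nra. }
  rewrite pwv_log_form by auto. unfold K1 in Hu. lra.
Qed.

End AlongTheTorus.

Lemma sequence_of_one_ps N (L : nat -> laurent1) (p : (nat -> Cx) -> R) :
  is_alg_1ps N L ->
  (forall M, exists delta, 0 < delta /\
     forall t : Cx, 0 < Cabs t < delta -> p (ops_point L t) < M) ->
  exists sq : nat -> nat -> Cx, (forall j, in_torus N (sq j)) /\
    (forall M, exists K : nat, forall j, (K <= j)%nat -> p (sq j) < M).
Proof.
  intros [Hnz _] Hlim.
  set (r := fun j : nat => / (INR j + 1)).
  assert (Hr : forall j, 0 < r j) by (intros; apply Rinv_0_lt_compat; pose proof (pos_INR j); lra).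
  exists (fun j => ops_point L (Creal (r j))). split.
  - intros j i Hi. apply Hnz; auto.
    intros E. apply (f_equal Re) in E. simpl in E. specialize (Hr j). lra.
  - intros M. destruct (Hlim M) as [d [Hd Ht]].
    destruct (INR_unbounded (/ d)) as [K HK].
    exists K. intros j Hj. apply Ht. unfold Cabs, Cnorm2, Creal; simpl.
    rewrite Rmult_0_l, Rplus_0_r, sqrt_square by (left; auto). split; auto.
    apply le_INR in Hj. pose proof (pos_INR K).
    apply Rle_lt_trans with (/ (INR K + 1)); [apply Rinv_le_contravar; lra|].
    replace d with (/ / d) by (field; lra). apply Rinv_lt_contravar; [|lra].
    pose proof (Rinv_0_lt_compat d Hd). nra.
Qed.

Theorem mainTheorem16 (N nV nW : nat) (EV EW : nat -> nat -> laurentN)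
  (hV hW : nat -> nat -> Cx) (v w : nat -> Cx) :
  is_rational_rep N nV EV -> is_rational_rep N nW EW ->
  herm_form nV hV -> herm_form nW hW ->
  nonzero_vec nV v -> nonzero_vec nW w ->
  ((exists sq : nat -> nat -> Cx,
      (forall j, in_torus N (sq j)) /\
      (forall M : R, exists K : nat, forall j, (K <= j)%nat ->
         pwv N nV nW EV EW hV hW v w (sq j) < M))
   <->
   (exists L : nat -> laurent1,
      is_alg_1ps N L /\
      (forall M : R, exists delta : R, 0 < delta /\
         forall t : Cx, 0 < Cabs t < delta ->
           pwv N nV nW EV EW hV hW v w (ops_point L t) < M))).
Proof.
  intros HrV HrW HhV HhW Hv Hw.
  destruct (orbit_estimate_exists N nW EW hW w HrW HhW Hw) as [Lw [c1w [C2w estW]]].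
  destruct (orbit_estimate_exists N nV EV hV v HrV HhV Hv) as [Lv [c1v [C2v estV]]].
  assert (Hnv : 0 < hnorm2 nV hV v) by (apply HhV; auto).
  assert (Hnw : 0 < hnorm2 nW hW w) by (apply HhW; auto).
  split.
  - intros [sq [Hsq Hlim]].
    destruct (classic (exists z : nat -> Z, dominated N Lw Lv (fun i => IZR (z i)) 1))
      as [[z Hz] | Hno].
    + exists (cocharacter z). split; [apply cocharacter_is_alg_1ps|].
      exact (pwv_along_cocharacter N nV nW EV EW hV hW v w Lv Lw c1v C2v c1w C2w
               estV estW Hnv Hnw z Hz).
    + exfalso.
      destruct (pwv_bounded_below N nV nW EV EW hV hW v w Lv Lw c1v C2v c1w C2w
                  estV estW Hnv Hnw (undominated_maximiser N Lw Lv Hno)) as [K0 HK0].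
      destruct (Hlim K0) as [K HK].
      specialize (HK K (le_n K)). specialize (HK0 (sq K) (Hsq K)). lra.
  - intros [L [HL Hlim]]. exact (sequence_of_one_ps N L _ HL Hlim).
Qed.
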